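(* In $(\lambda^2\beta\eta\pi* )'$, let $\varphi$ be a type, $\vec X=X_1,\ldots,X_m$ distinct type variables containing all free type variables of $\varphi$, $\vec\psi=\psi_1,\ldots,\psi_m$ types, and $\vec{\mathcal R}=\mathcal R_1,\ldots,\mathcal R_m$ RCs of types $\psi_1,\ldots,\psi_m$ respectively. Then $\mathsf{RED}_\varphi[\vec X:=\vec{\mathcal R}]$ is an RC of type $\varphi[\vec X:=\vec\psi]$.
   Context: System $(\lambda^2\beta\eta\pi* )'$. Types are generated from type variables $X,Y,\ldots$ and a type constant $\top$ by $\varphi\times\psi$, $\varphi\to\psi$ and $\forall X.\varphi$. Terms are Church-style typed: the constant $*^\top$, variables $x^\varphi$, $\lambda x^\varphi.t$, application $uv$, pairs $\langle u,v\rangle$, projections $\pi_1t,\pi_2t$, universal abstraction $(\Lambda X.v^\varphi)^{\forall X.\varphi}$ (allowed only when $X$ is not free in the type of any free variable of $v$), and universal application $(t^{\forall X.\varphi}\psi)^{\varphi[X:=\psi]}$. Terms are identified up to renaming of bound variables ($\equiv$); $\mathrm{FV}$, $\mathrm{FTV}$ denote free term / type variables. $\mathit{Iso}(\top)$ is the least set of types with $\top\in\mathit{Iso}(\top)$, $\varphi\to\tau$, $\forall X.\tau\in\mathit{Iso}(\top)$ if $\tau\in\mathit{Iso}(\top)$, $\tau_1\times\tau_2\in\mathit{Iso}(\top)$ if $\tau_1,\tau_2\in\mathit{Iso}(\top)$. For $\tau\in\mathit{Iso}(\top)$: $*^\top$ is the constant, $*^{\varphi\to\tau}:=\lambda x^\varphi.*^\tau$,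 $*^{\tau_1\times\tau_2}:=\langle *^{\tau_1},*^{\tau_2}\rangle$, $*^{\forall X.\tau}:=\Lambda X.*^\tau$. The one-step relation $\to$ is the closure under all contexts of: $(\beta)$ $(\lambda x.u)v\to u[x:=v]$; $\pi_1\langle u,v\rangle\to u$, $\pi_2\langle u,v\rangle\to v$; $(\eta)$ $\lambda x.tx\to t$ ($x\notin\mathrm{FV}(t)$); $(SP)$ $\langle\pi_1u,\pi_2u\rangle\to u$; (gentop) $u^\tau\to *^\tau$ ($\tau\in\mathit{Iso}(\top)$, $u\not\equiv *^\tau$); $(\eta_{top})$ $\lambda x^\tau.t\,*^\tau\to t$ ($x\notin\mathrm{FV}(t)$, $\tau\in\mathit{Iso}(\top)$); $\langle\pi_1u,*^\tau\rangle\to u$ ($u:\varphi\times\tau$, $\tau\in\mathit{Iso}(\top)$); $\langle *^\tau,\pi_2u\rangle\to u$ ($u:\tau\times\psi$, $\tau\in\mathit{Iso}(\top)$); $(\beta^2)$ $(\Lambda X.t)\varphi\to t[X:=\varphi]$; $(\eta^2)$ $\Lambda X.sX\to s$ ($X\notin\mathrm{FTV}(s)$). A term is SN if no infinite $\to$-sequence starts from it; $\mathcal{SN}^\psi$ is the set of SN terms of type $\psi$. A term is neutral if it is not of the form $\langle u,v\rangle$, $\lambda x.v$ or $\Lambda X.u$. For a term $t$ and a variable $z^\top$, $t[*^\top:=z^\top]$ replaces every occurrence of the constant $*^\top$ in $t$ by $z^\top$; a set $A$ of terms is variant-closed if $t[*^\top:=z^\top]\in A$ for every $t\in A$ and every variable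 $z^\top$ not occurring in $t$. A reducibility candidate (RC) of type $\varphi$ is a set $\mathcal{R}$ of terms of type $\varphi$ such that: (CR0) if $\varphi\in\mathit{Iso}(\top)$ then $*^\varphi\in\mathcal{R}$, and $\mathcal{R}$ is variant-closed; (CR1) every $t\in\mathcal{R}$ is SN; (CR2) $t\in\mathcal{R}$, $t\to t'$ imply $t'\in\mathcal{R}$; (CR3) if $t$ of type $\varphi$ is neutral and every one-step reduct of $t$ is in $\mathcal{R}$, then $t\in\mathcal{R}$. For RCs $\mathcal{R}_i$ of type $\varphi_i$: $\mathcal{R}_1\times\mathcal{R}_2=\{t^{\varphi_1\times\varphi_2}\mid \pi_it\in\mathcal{R}_i, i=1,2\}$ and $\mathcal{R}_1\to\mathcal{R}_2=\{t^{\varphi_1\to\varphi_2}\mid \forall u\in\mathcal{R}_1,\ tu\in\mathcal{R}_2\}$. Given a type $\varphi$, distinct type variables $\vec X=X_1,\ldots,X_m$ containing the free type variables of $\varphi$, types $\vec\psi=\psi_1,\ldots,\psi_m$ and RCs $\vec{\mathcal{R}}=\mathcal{R}_1,\ldots,\mathcal{R}_m$ of types $\vec\psi$, the set $\mathsf{RED}_\varphi[\vec X:=\vec{\mathcal{R}}]$ of terms of type $\varphi[\vec X:=\vec\psi]$ is defined by induction on $\varphi$: $\mathsf{RED}_\top[\vec X:=\vec{\mathcal R}]=\mathcal{SN}^\top$; $\mathsf{RED}_{X_i}[\vec X:=\vec{\mathcal R}]=\mathcal{R}_i$; $\mathsf{RED}_{\varphi'\circ\varphi''}[\vec X:=\vec{\mathcal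 R}]=\mathsf{RED}_{\varphi'}[\vec X:=\vec{\mathcal R}]\circ\mathsf{RED}_{\varphi''}[\vec X:=\vec{\mathcal R}]$ for $\circ\in\{\to,\times\}$; for $\varphi=\forall Y.\varphi'$ (with $Y$ distinct from all $X_i$ and not free in $\vec\psi$), $\mathsf{RED}_\varphi[\vec X:=\vec{\mathcal R}]$ is the set of terms $t$ of type $(\forall Y.\varphi')[\vec X:=\vec\psi]$ such that for every type $\psi$ and every RC $\mathcal{S}$ of type $\psi$, $t\psi\in\mathsf{RED}_{\varphi'}[\vec X,Y:=\vec{\mathcal R},\mathcal{S}]$. *)

(* System (lambda^2 beta eta pi * )' in a de Bruijn / named hybrid:
   - bound type variables (under forall / Lambda) are de Bruijn indices TBVar,
     free type variables are named TFVar X;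
   - bound term variables are de Bruijn indices BVar (their type is the
     annotation of their binder), free term variables are named and carry
     their type (Church style): FVar x A is the variable x^A.
   Terms are thus automatically identified up to renaming of bound variables. *)
From Stdlib Require Import List Arith PeanoNat Bool.
Import ListNotations.

Inductive ty : Type :=
| TFVar (X : nat)
| TBVar (n : nat)
| TTop
| TProd (A B : ty)
| TArr (A B : ty)
| TAll (B : ty).

Definition ty_eq_dec (A B : ty) : {A = B} + {A <> B}.
Proof. decide equality; apply Nat.eq_dec. Defined.

Fixpoint ty_wf (d : nat) (T : ty) : bool :=
  match T with
  | TFVar _ => true
  | TBVar n => n <? d
  | TTop => true
  | TProd A B | TArr A B => ty_wf d A && ty_wf d B
  | TAll B => ty_wf (S d) B
  end.

Definition is_type (T : ty) : Prop := ty_wf 0 T = true.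

Fixpoint ftv (T : ty) : list nat :=
  match T with
  | TFVar X => [X]
  | TBVar _ | TTop => []
  | TProd A B | TArr A B => ftv A ++ ftv B
  | TAll B => ftv B
  end.

Fixpoint ty_shift (c : nat) (T : ty) : ty :=
  match T with
  | TFVar X => TFVar X
  | TBVar n => if c <=? n then TBVar (S n) else TBVar n
  | TTop => TTop
  | TProd A B => TProd (ty_shift c A) (ty_shift c B)
  | TArr A B => TArr (ty_shift c A) (ty_shift c B)
  | TAll B => TAll (ty_shift (S c) B)
  end.

Fixpoint ty_subst (k : nat) (U : ty) (T : ty) : ty :=
  match T with
  | TFVar X => TFVar X
  | TBVar n => if n =? k then U else if k <? n then TBVar (pred n) else TBVar n
  | TTop => TTop
  | TProd A B => TProd (ty_subst k U A) (ty_subst k U B)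
  | TArr A B => TArr (ty_subst k U A) (ty_subst k U B)
  | TAll B => TAll (ty_subst (S k) (ty_shift 0 U) B)
  end.

(* simultaneous instantiation: free names via f, bound indices >= k via g
   (f and g are meant to return closed types) *)
Fixpoint tinst (f : nat -> ty) (g : nat -> ty) (k : nat) (T : ty) : ty :=
  match T with
  | TFVar X => f X
  | TBVar n => if n <? k then TBVar n else g (n - k)
  | TTop => TTop
  | TProd A B => TProd (tinst f g k A) (tinst f g k B)
  | TArr A B => TArr (tinst f g k A) (tinst f g k B)
  | TAll B => TAll (tinst f g (S k) B)
  end.

Fixpoint iso (T : ty) : bool :=
  match T with
  | TTop => true
  | TArr _ B => iso B
  | TAll B => iso B
  | TProd A B => iso A && iso B
  | _ => false
  end.

Inductive tm : Type :=
| Star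
| FVar (x : nat) (A : ty)
| BVar (n : nat)
| Lam (A : ty) (t : tm)
| App (t u : tm)
| Pair (t u : tm)
| Proj1 (t : tm)
| Proj2 (t : tm)
| TLam (t : tm)
| TApp (t : tm) (A : ty).

Fixpoint star (T : ty) : tm :=
  match T with
  | TArr A B => Lam A (star B)
  | TProd A B => Pair (star A) (star B)
  | TAll B => TLam (star B)
  | _ => Star
  end.

Fixpoint tm_shift (c : nat) (t : tm) : tm :=
  match t with
  | Star => Star
  | FVar x A => FVar x A
  | BVar n => if c <=? n then BVar (S n) else BVar n
  | Lam A b => Lam A (tm_shift (S c) b)
  | App u v => App (tm_shift c u) (tm_shift c v)
  | Pair u v => Pair (tm_shift c u) (tm_shift c v)
  | Proj1 u => Proj1 (tm_shift c u)
  | Proj2 u => Proj2 (tm_shift c u)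
  | TLam b => TLam (tm_shift c b)
  | TApp u A => TApp (tm_shift c u) A
  end.

Fixpoint tm_tshift (c : nat) (t : tm) : tm :=
  match t with
  | Star => Star
  | FVar x A => FVar x A
  | BVar n => BVar n
  | Lam A b => Lam (ty_shift c A) (tm_tshift c b)
  | App u v => App (tm_tshift c u) (tm_tshift c v)
  | Pair u v => Pair (tm_tshift c u) (tm_tshift c v)
  | Proj1 u => Proj1 (tm_tshift c u)
  | Proj2 u => Proj2 (tm_tshift c u)
  | TLam b => TLam (tm_tshift (S c) b)
  | TApp u A => TApp (tm_tshift c u) (ty_shift c A)
  end.

Fixpoint tm_subst (k : nat) (v : tm) (t : tm) : tm :=
  match t with
  | Star => Star
  | FVar x A => FVar x A
  | BVar n => if n =? k then v else if k <? n then BVar (pred n) else BVar n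
  | Lam A b => Lam A (tm_subst (S k) (tm_shift 0 v) b)
  | App u w => App (tm_subst k v u) (tm_subst k v w)
  | Pair u w => Pair (tm_subst k v u) (tm_subst k v w)
  | Proj1 u => Proj1 (tm_subst k v u)
  | Proj2 u => Proj2 (tm_subst k v u)
  | TLam b => TLam (tm_subst k (tm_tshift 0 v) b)
  | TApp u A => TApp (tm_subst k v u) A
  end.

Fixpoint tm_tsubst (k : nat) (U : ty) (t : tm) : tm :=
  match t with
  | Star => Star
  | FVar x A => FVar x A
  | BVar n => BVar n
  | Lam A b => Lam (ty_subst k U A) (tm_tsubst k U b)
  | App u w => App (tm_tsubst k U u) (tm_tsubst k U w)
  | Pair u w => Pair (tm_tsubst k U u) (tm_tsubst k U w)
  | Proj1 u => Proj1 (tm_tsubst k U u)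
  | Proj2 u => Proj2 (tm_tsubst k U u)
  | TLam b => TLam (tm_tsubst (S k) (ty_shift 0 U) b)
  | TApp u A => TApp (tm_tsubst k U u) (ty_subst k U A)
  end.

(* Church-style type of a term.  d = number of enclosing type binders,
   G = types of the enclosing term binders (index 0 = innermost).
   A free variable x^A must have a closed type A: this is exactly the side
   condition on Lambda X.v (X not free in the type of a free variable of v). *)
Fixpoint typeof (d : nat) (G : list ty) (t : tm) : option ty :=
  match t with
  | Star => Some TTop
  | FVar _ A => if ty_wf 0 A then Some A else None
  | BVar n => nth_error G n
  | Lam A b =>
      if ty_wf d A then
        match typeof d (A :: G) b with Some B => Some (TArr A B) | None => None end
      else None
  | App u v =>
      match typeof d G u, typeof d G v with
      | Some (TArr A B), Some A' => if ty_eq_dec A A' then Some B else None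
      | _, _ => None
      end
  | Pair u v =>
      match typeof d G u, typeof d G v with
      | Some A, Some B => Some (TProd A B)
      | _, _ => None
      end
  | Proj1 u => match typeof d G u with Some (TProd A _) => Some A | _ => None end
  | Proj2 u => match typeof d G u with Some (TProd _ B) => Some B | _ => None end
  | TLam b =>
      match typeof (S d) (map (ty_shift 0) G) b with
      | Some B => Some (TAll B)
      | None => None
      end
  | TApp u U =>
      if ty_wf d U then
        match typeof d G u with Some (TAll B) => Some (ty_subst 0 U B) | _ => None end
      else None
  end.

Definition has_type (t : tm) (T : ty) : Prop := typeof 0 [] t = Some T.

Inductive step : nat -> list ty -> tm -> tm -> Prop :=
| st_beta d G A u v : step d G (App (Lam A u) v) (tm_subst 0 v u)
| st_proj1 d G u v : step d G (Proj1 (Pair u v)) u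
| st_proj2 d G u v : step d G (Proj2 (Pair u v)) v
| st_eta d G A t : step d G (Lam A (App (tm_shift 0 t) (BVar 0))) t
| st_sp d G u : step d G (Pair (Proj1 u) (Proj2 u)) u
| st_gentop d G u T :
    typeof d G u = Some T -> iso T = true -> u <> star T -> step d G u (star T)
| st_etatop d G A t :
    iso A = true -> step d G (Lam A (App (tm_shift 0 t) (star A))) t
| st_sptop1 d G u P T :
    typeof d G u = Some (TProd P T) -> iso T = true ->
    step d G (Pair (Proj1 u) (star T)) u
| st_sptop2 d G u T P :
    typeof d G u = Some (TProd T P) -> iso T = true ->
    step d G (Pair (star T) (Proj2 u)) u
| st_beta2 d G t U : step d G (TApp (TLam t) U) (tm_tsubst 0 U t)
| st_eta2 d G s : step d G (TLam (TApp (tm_tshift 0 s) (TBVar 0))) s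
| st_lam d G A t t' : step d (A :: G) t t' -> step d G (Lam A t) (Lam A t')
| st_appl d G u u' v : step d G u u' -> step d G (App u v) (App u' v)
| st_appr d G u v v' : step d G v v' -> step d G (App u v) (App u v')
| st_pairl d G u u' v : step d G u u' -> step d G (Pair u v) (Pair u' v)
| st_pairr d G u v v' : step d G v v' -> step d G (Pair u v) (Pair u v')
| st_proj1c d G u u' : step d G u u' -> step d G (Proj1 u) (Proj1 u')
| st_proj2c d G u u' : step d G u u' -> step d G (Proj2 u) (Proj2 u')
| st_tlam d G t t' :
    step (S d) (map (ty_shift 0) G) t t' -> step d G (TLam t) (TLam t')
| st_tapp d G u u' U : step d G u u' -> step d G (TApp u U) (TApp u' U).

Definition red (t t' : tm) : Prop := step 0 [] t t'.

Definition SN (t : tm) : Prop :=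
  ~ (exists s : nat -> tm, s 0 = t /\ forall n, red (s n) (s (S n))).

Definition SN_set (T : ty) (t : tm) : Prop := has_type t T /\ SN t.

Definition neutral (t : tm) : Prop :=
  match t with
  | Pair _ _ | Lam _ _ | TLam _ => False
  | _ => True
  end.

Fixpoint replace_star (z : nat) (t : tm) : tm :=
  match t with
  | Star => FVar z TTop
  | FVar x A => FVar x A
  | BVar n => BVar n
  | Lam A b => Lam A (replace_star z b)
  | App u v => App (replace_star z u) (replace_star z v)
  | Pair u v => Pair (replace_star z u) (replace_star z v)
  | Proj1 u => Proj1 (replace_star z u)
  | Proj2 u => Proj2 (replace_star z u)
  | TLam b => TLam (replace_star z b)
  | TApp u A => TApp (replace_star z u) A
  end.

Fixpoint occurs (x : nat) (A : ty) (t : tm) : Prop :=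
  match t with
  | Star | BVar _ => False
  | FVar y B => y = x /\ B = A
  | Lam _ b | Proj1 b | Proj2 b | TLam b | TApp b _ => occurs x A b
  | App u v | Pair u v => occurs x A u \/ occurs x A v
  end.

Definition variant_closed (R : tm -> Prop) : Prop :=
  forall t z, R t -> ~ occurs z TTop t -> R (replace_star z t).

Definition RC (T : ty) (R : tm -> Prop) : Prop :=
  (forall t, R t -> has_type t T) /\
  ((iso T = true -> R (star T)) /\ variant_closed R) /\
  (forall t, R t -> SN t) /\
  (forall t t', R t -> red t t' -> R t') /\
  (forall t, has_type t T -> neutral t ->
               (forall t', red t t' -> R t') -> R t).

Definition scons {A : Type} (a : A) (g : nat -> A) (n : nat) : A :=
  match n with 0 => a | S m => g m end.

(* RED_T with free names interpreted by (f,F) and bound indices by (g,G) *)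
Fixpoint RED (f : nat -> ty) (F : nat -> tm -> Prop)
             (g : nat -> ty) (G : nat -> tm -> Prop) (T : ty) (t : tm) {struct T} : Prop :=
  match T with
  | TTop => SN_set TTop t
  | TFVar X => F X t
  | TBVar n => G n t
  | TProd A B =>
      has_type t (tinst f g 0 T) /\ RED f F g G A (Proj1 t) /\ RED f F g G B (Proj2 t)
  | TArr A B =>
      has_type t (tinst f g 0 T) /\
      (forall u, RED f F g G A u -> RED f F g G B (App t u))
  | TAll B =>
      has_type t (tinst f g 0 T) /\
      (forall (U : ty) (S : tm -> Prop), is_type U -> RC U S ->
         RED f F (scons U g) (scons S G) B (TApp t U))
  end.

Fixpoint assoc {A : Type} (Xs : list nat) (vs : list A) (X : nat) : option A :=
  match Xs, vs with
  | Y :: Xs', v :: vs' => if Y =? X then Some v else assoc Xs' vs' X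
  | _, _ => None
  end.

Definition fsub (Xs : list nat) (ps : list ty) (X : nat) : ty :=
  match assoc Xs ps X with Some p => p | None => TFVar X end.

Definition fRC (Xs : list nat) (Rs : list (tm -> Prop)) (X : nat) : tm -> Prop :=
  match assoc Xs Rs X with Some R => R | None => fun _ => False end.

Definition msubst (Xs : list nat) (ps : list ty) (phi : ty) : ty :=
  tinst (fsub Xs ps) (fun _ => TTop) 0 phi.

(* RED_phi[Xs := Rs] (the types ps of the Rs are needed for the typing constraints) *)
Definition RED_vec (Xs : list nat) (ps : list ty) (Rs : list (tm -> Prop)) (phi : ty)
  : tm -> Prop :=
  RED (fsub Xs ps) (fRC Xs Rs) (fun _ => TTop) (fun _ _ => False) phi.

From Stdlib Require Import List PeanoNat Bool Lia Classical ClassicalEpsilon.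
Import ListNotations.

(* By induction on the type, RED is assembled from the given candidates, from
   SN^T, and from the operations x, -> and "intersection over all candidates";
   so it suffices that each of them yields a candidate.  CR1-CR3 follow Girard:
   CR3 for an elimination of a neutral term needs no redex case, and the new
   gentop reducts *^tau lie in every candidate of type tau by CR0.  Variant
   closure is the new point.  For SN^T, undoing a variant (turning z back into
   * ) simulates every step, except gentop steps that lower the number of z's.
   For an arrow candidate, given u, undo the variant in u: the result u0 is a
   reduct of u, t u0 has no z, and the variant of t u0 reduces to
   (replace_star z t) u. *)

(** * De Bruijn algebra of types *)

Lemma ty_wf_mono : forall T a b, ty_wf a T = true -> a <= b -> ty_wf b T = true.
Proof.
  induction T; cbn [ty_shift ty_subst ty_wf]; intros a b H Hle; auto.
  - apply Nat.ltb_lt in H; apply Nat.ltb_lt; lia.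
  - apply andb_true_iff in H as [H1 H2]; rewrite (IHT1 a b), (IHT2 a b); auto.
  - apply andb_true_iff in H as [H1 H2]; rewrite (IHT1 a b), (IHT2 a b); auto.
  - apply (IHT (S a)); auto; lia.
Qed.

Lemma ty_shift_wf : forall T c, ty_wf c T = true -> ty_shift c T = T.
Proof.
  induction T; cbn [ty_shift ty_subst ty_wf]; intros c H; auto.
  - apply Nat.ltb_lt in H. destruct (c <=? n) eqn:E; auto. apply Nat.leb_le in E; lia.
  - apply andb_true_iff in H as [H1 H2]; rewrite IHT1, IHT2; auto.
  - apply andb_true_iff in H as [H1 H2]; rewrite IHT1, IHT2; auto.
  - rewrite IHT; auto.
Qed.

Lemma ty_subst_wf : forall T k U, ty_wf k T = true -> ty_subst k U T = T.
Proof.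
  induction T; cbn [ty_shift ty_subst ty_wf]; intros k U H; auto.
  - apply Nat.ltb_lt in H. destruct (n =? k) eqn:E. apply Nat.eqb_eq in E; lia.
    destruct (k <? n) eqn:E2; auto. apply Nat.ltb_lt in E2; lia.
  - apply andb_true_iff in H as [H1 H2]; rewrite IHT1, IHT2; auto.
  - apply andb_true_iff in H as [H1 H2]; rewrite IHT1, IHT2; auto.
  - rewrite IHT; auto.
Qed.

Lemma ty_wf_shift : forall T c d, c <= d -> ty_wf (S d) (ty_shift c T) = ty_wf d T.
Proof.
  induction T; cbn [ty_shift ty_subst ty_wf]; intros c d Hle; auto.
  - destruct (c <=? n) eqn:E; simpl.
    + destruct (n <? d) eqn:E2; [apply Nat.ltb_lt in E2|apply Nat.ltb_ge in E2];
      [apply Nat.ltb_lt|apply Nat.ltb_ge]; lia.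
    + apply Nat.leb_gt in E. assert (n < d) by lia.
      rewrite (proj2 (Nat.ltb_lt _ _) H). apply Nat.ltb_lt; lia.
  - rewrite IHT1, IHT2; auto.
  - rewrite IHT1, IHT2; auto.
  - apply IHT; lia.
Qed.

Lemma ty_shift_inj : forall A B c, ty_shift c A = ty_shift c B -> A = B.
Proof.
  induction A; destruct B; simpl; intros c H; try discriminate;
  try (destruct (c <=? n); discriminate);
  try (destruct (c <=? n0); discriminate); auto.
  - destruct (Nat.leb_spec c n), (Nat.leb_spec c n0); inversion H; subst; auto; lia.
  - inversion H. f_equal; eauto.
  - inversion H. f_equal; eauto.
  - inversion H. f_equal; eauto.
Qed.

Ltac case_nat_cmp :=
  repeat (cbn [ty_shift ty_subst] in *;
  match goal with
  | |- context [?a <=? ?b] => destruct (Nat.leb_spec a b)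
  | |- context [?a <? ?b] => destruct (Nat.ltb_spec a b)
  | |- context [?a =? ?b] => destruct (Nat.eqb_spec a b)
  end); subst; try lia; auto; try (f_equal; lia).

Lemma ty_shift_shift : forall A c c', c <= c' ->
  ty_shift c (ty_shift c' A) = ty_shift (S c') (ty_shift c A).
Proof.
  induction A; cbn [ty_shift ty_subst ty_wf]; intros c c' Hle; auto.
  - case_nat_cmp.
  - rewrite IHA1, IHA2; auto.
  - rewrite IHA1, IHA2; auto.
  - rewrite IHA; auto. lia.
Qed.

Lemma ty_shift_subst_high : forall B c k U, k <= c ->
  ty_shift c (ty_subst k U B) = ty_subst k (ty_shift c U) (ty_shift (S c) B).
Proof.
  induction B; cbn [ty_shift ty_subst ty_wf]; intros c k U Hle; auto.
  - case_nat_cmp.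
  - rewrite IHB1, IHB2; auto.
  - rewrite IHB1, IHB2; auto.
  - rewrite IHB by lia. f_equal. f_equal. symmetry. apply ty_shift_shift; lia.
Qed.

Lemma ty_shift_subst_low : forall A c k U, c <= k ->
  ty_shift c (ty_subst k U A) = ty_subst (S k) (ty_shift c U) (ty_shift c A).
Proof.
  induction A; cbn [ty_shift ty_subst ty_wf]; intros c k U Hle; auto.
  - case_nat_cmp.
  - rewrite IHA1, IHA2; auto.
  - rewrite IHA1, IHA2; auto.
  - rewrite IHA by lia. f_equal. f_equal. symmetry. apply ty_shift_shift; lia.
Qed.

Lemma ty_subst_shift : forall U j W, ty_subst j W (ty_shift j U) = U.
Proof.
  induction U; cbn [ty_shift ty_subst ty_wf]; intros j W; auto.
  - case_nat_cmp.
  - rewrite IHU1, IHU2; auto.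
  - rewrite IHU1, IHU2; auto.
  - rewrite IHU; auto.
Qed.

Lemma ty_subst_eta : forall C k, ty_subst k (TBVar k) (ty_shift (S k) C) = C.
Proof.
  induction C; cbn [ty_shift ty_subst ty_wf]; intros k; auto.
  - case_nat_cmp.
  - rewrite IHC1, IHC2; auto.
  - rewrite IHC1, IHC2; auto.
  - simpl. rewrite IHC; auto.
Qed.

Lemma ty_subst_subst : forall C j k U V, j <= k ->
  ty_subst k U (ty_subst j V C) =
  ty_subst j (ty_subst k U V) (ty_subst (S k) (ty_shift j U) C).
Proof.
  induction C; cbn [ty_shift ty_subst ty_wf]; intros j k U V Hle; auto.
  - case_nat_cmp. rewrite ty_subst_shift; auto.
  - rewrite IHC1, IHC2; auto.
  - rewrite IHC1, IHC2; auto.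
  - rewrite IHC by lia. f_equal. f_equal.
    + symmetry. apply ty_shift_subst_low; lia.
    + f_equal. symmetry. apply ty_shift_shift; lia.
Qed.

Lemma ty_wf_subst : forall T d k U, ty_wf (S d) T = true -> ty_wf d U = true -> k <= d ->
  ty_wf d (ty_subst k U T) = true.
Proof.
  induction T; cbn [ty_shift ty_subst ty_wf]; intros d k U H HU Hk; auto.
  - apply Nat.ltb_lt in H. case_nat_cmp; apply Nat.ltb_lt; lia.
  - apply andb_true_iff in H as [H1 H2]; rewrite IHT1, IHT2; auto.
  - apply andb_true_iff in H as [H1 H2]; rewrite IHT1, IHT2; auto.
  - apply IHT; auto. rewrite ty_wf_shift; auto; lia. lia.
Qed.

Definition closed_env (f : nat -> ty) := forall n, ty_wf 0 (f n) = true.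

Lemma tinst_wf : forall T f g k, closed_env f -> closed_env g -> ty_wf k (tinst f g k T) = true.
Proof.
  induction T; simpl; intros f g k Hf Hg; auto.
  - eapply ty_wf_mono; [apply Hf|lia].
  - destruct (Nat.ltb_spec n k); simpl. apply Nat.ltb_lt; auto.
    eapply ty_wf_mono; [apply Hg|lia].
  - rewrite IHT1, IHT2; auto.
  - rewrite IHT1, IHT2; auto.
Qed.

Lemma closed_env_scons : forall U g, ty_wf 0 U = true -> closed_env g -> closed_env (scons U g).
Proof. intros U g HU Hg [|n]; simpl; auto. Qed.

Lemma tinst_scons : forall B f g U k, closed_env f -> closed_env g -> ty_wf 0 U = true ->
  tinst f (scons U g) k B = ty_subst k U (tinst f g (S k) B).
Proof.
  induction B; cbn [tinst ty_subst]; intros f g U k Hf Hg HU; auto.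
  - rewrite ty_subst_wf; auto. eapply ty_wf_mono; [apply Hf|lia].
  - destruct (Nat.ltb_spec n k); destruct (Nat.ltb_spec n (S k)); try lia.
    + cbn [ty_subst]. destruct (Nat.eqb_spec n k); try lia.
      destruct (Nat.ltb_spec k n); try lia; auto.
    + assert (n = k) by lia. subst. rewrite Nat.sub_diag. simpl.
      rewrite Nat.eqb_refl. auto.
    + replace (n - k) with (S (n - S k)) by lia. simpl.
      rewrite ty_subst_wf; auto. eapply ty_wf_mono; [apply Hg|lia].
  - rewrite IHB1, IHB2; auto.
  - rewrite IHB1, IHB2; auto.
  - rewrite IHB; auto. rewrite (ty_shift_wf U); auto.
Qed.

Lemma iso_subst : forall T k U, iso T = true -> iso (ty_subst k U T) = true.
Proof.
  induction T; simpl; intros k U H; try discriminate; auto.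
  apply andb_true_iff in H as [H1 H2]; rewrite IHT1, IHT2; auto.
Qed.

(** * Typing and subject reduction *)

Lemma star_typeof : forall T d G, iso T = true -> ty_wf d T = true ->
  typeof d G (star T) = Some T.
Proof.
  induction T; simpl; intros d G Hi Hw; try discriminate; auto.
  - apply andb_true_iff in Hi as [H1 H2]; apply andb_true_iff in Hw as [H3 H4].
    rewrite IHT1, IHT2; auto.
  - apply andb_true_iff in Hw as [H3 H4]. rewrite H3, IHT2; auto.
  - rewrite IHT; auto.
Qed.

Lemma star_typeof_inv : forall T d G T0, typeof d G (star T) = Some T0 -> star T0 = star T.
Proof.
  induction T; simpl; intros d G T0 H; try (inversion H; subst; reflexivity).
  - destruct (typeof d G (star T1)) eqn:E1; [|discriminate].
    destruct (typeof d G (star T2)) eqn:E2; [|discriminate].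
    inversion H; subst. simpl. rewrite (IHT1 _ _ _ E1), (IHT2 _ _ _ E2); auto.
  - destruct (ty_wf d T1); [|discriminate].
    destruct (typeof d (T1 :: G) (star T2)) eqn:E2; [|discriminate].
    inversion H; subst. simpl. rewrite (IHT2 _ _ _ E2); auto.
  - destruct (typeof (S d) (map (ty_shift 0) G) (star T)) eqn:E; [|discriminate].
    inversion H; subst. simpl. rewrite (IHT _ _ _ E); auto.
Qed.

Lemma star_tm_subst : forall T k v, tm_subst k v (star T) = star T.
Proof. induction T; simpl; intros; f_equal; auto. Qed.

Lemma star_tsubst : forall T k U, iso T = true -> tm_tsubst k U (star T) = star (ty_subst k U T).
Proof.
  induction T; simpl; intros k U H; try discriminate; auto.
  - apply andb_true_iff in H as [H1 H2]; rewrite IHT1, IHT2; auto.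
  - rewrite IHT2; auto.
  - rewrite IHT; auto.
Qed.

Definition wfctx d (G : list ty) := Forall (fun A => ty_wf d A = true) G.

Lemma wfctx_shift : forall d G, wfctx d G -> wfctx (S d) (map (ty_shift 0) G).
Proof.
  intros d G H. unfold wfctx. rewrite Forall_map. eapply Forall_impl; [|exact H].
  intros a Ha. rewrite ty_wf_shift; auto; lia.
Qed.

Lemma typeof_wf : forall t d G T, wfctx d G ->
  typeof d G t = Some T -> ty_wf d T = true.
Proof.
  induction t; simpl; intros d G T HG H.
  - inversion H; auto.
  - destruct (ty_wf 0 A) eqn:E; inversion H; subst. eapply ty_wf_mono; eauto; lia.
  - apply nth_error_In in H. unfold wfctx in HG. rewrite Forall_forall in HG; auto.
  - destruct (ty_wf d A) eqn:E; [|discriminate].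
    destruct (typeof d (A :: G) t) eqn:E2; [|discriminate]. inversion H; subst.
    simpl. rewrite E. simpl. apply (IHt d (A :: G)); [constructor|]; auto.
  - destruct (typeof d G t1) as [[]|] eqn:E1; try discriminate;
    destruct (typeof d G t2) eqn:E2; try discriminate.
    destruct (ty_eq_dec A t); inversion H; subst.
    apply IHt1 in E1; auto. simpl in E1. apply andb_true_iff in E1; tauto.
  - destruct (typeof d G t1) eqn:E1; try discriminate;
    destruct (typeof d G t2) eqn:E2; try discriminate. inversion H; subst.
    simpl; rewrite (IHt1 _ _ _ HG E1), (IHt2 _ _ _ HG E2); auto.
  - destruct (typeof d G t) as [[]|] eqn:E1; try discriminate. inversion H; subst.
    apply IHt in E1; auto. simpl in E1. apply andb_true_iff in E1; tauto.
  - destruct (typeof d G t) as [[]|] eqn:E1; try discriminate. inversion H; subst.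
    apply IHt in E1; auto. simpl in E1. apply andb_true_iff in E1; tauto.
  - destruct (typeof (S d) (map (ty_shift 0) G) t) eqn:E; try discriminate.
    inversion H; subst. simpl. apply (IHt (S d) (map (ty_shift 0) G)); auto.
    apply wfctx_shift, HG.
  - destruct (ty_wf d A) eqn:EA; try discriminate.
    destruct (typeof d G t) as [[]|] eqn:E1; try discriminate. inversion H; subst.
    apply IHt in E1; auto. simpl in E1. apply ty_wf_subst; auto. lia.
Qed.

Lemma typeof_shift : forall t d G1 G A,
  typeof d (G1 ++ A :: G) (tm_shift (length G1) t) = typeof d (G1 ++ G) t.
Proof.
  induction t; intros d G1 G A0; cbn [tm_shift typeof]; auto.
  - destruct (Nat.leb_spec (length G1) n).
    + cbn [typeof]. rewrite !nth_error_app2 by lia.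
      replace (S n - length G1) with (S (n - length G1)) by lia. reflexivity.
    + cbn [typeof]. rewrite !nth_error_app1 by lia. auto.
  - destruct (ty_wf d A); auto.
    specialize (IHt d (A :: G1) G A0). simpl in IHt. rewrite IHt. auto.
  - rewrite IHt1, IHt2; auto.
  - rewrite IHt1, IHt2; auto.
  - rewrite IHt; auto.
  - rewrite IHt; auto.
  - rewrite !map_app. simpl.
    specialize (IHt (S d) (map (ty_shift 0) G1) (map (ty_shift 0) G) (ty_shift 0 A0)).
    rewrite length_map in IHt. rewrite IHt. auto.
  - rewrite IHt; auto.
Qed.

Lemma typeof_shift0 : forall t d G A,
  typeof d (A :: G) (tm_shift 0 t) = typeof d G t.
Proof. intros. apply (typeof_shift t d [] G A). Qed.

Lemma typeof_tshift : forall t c d G, c <= d ->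
  typeof (S d) (map (ty_shift c) G) (tm_tshift c t) = option_map (ty_shift c) (typeof d G t).
Proof.
  induction t; intros c d G Hc; cbn [tm_tshift typeof].
  - reflexivity.
  - destruct (ty_wf 0 A) eqn:E; simpl; auto. rewrite ty_shift_wf; auto.
    eapply ty_wf_mono; eauto; lia.
  - apply nth_error_map.
  - rewrite ty_wf_shift by auto. destruct (ty_wf d A); auto.
    specialize (IHt c d (A :: G) Hc). simpl in IHt. rewrite IHt.
    destruct (typeof d (A :: G) t); auto.
  - rewrite IHt1, IHt2 by auto.
    destruct (typeof d G t1) as [[]|]; simpl; auto;
    try (destruct (c <=? n); auto; fail);
    destruct (typeof d G t2); simpl; auto.
    destruct (ty_eq_dec A t); destruct (ty_eq_dec (ty_shift c A) (ty_shift c t)); subst; auto.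
    + exfalso; auto.
    + apply ty_shift_inj in e; contradiction.
  - rewrite IHt1, IHt2 by auto.
    destruct (typeof d G t1); destruct (typeof d G t2); simpl; auto.
  - rewrite IHt by auto. destruct (typeof d G t) as [[]|]; simpl; auto.
    destruct (c <=? n); auto.
  - rewrite IHt by auto. destruct (typeof d G t) as [[]|]; simpl; auto.
    destruct (c <=? n); auto.
  - rewrite map_map.
    replace (map (fun x => ty_shift 0 (ty_shift c x)) G) with
      (map (ty_shift (S c)) (map (ty_shift 0) G)).
    2:{ rewrite map_map. apply map_ext. intros a. symmetry. apply ty_shift_shift. lia. }
    rewrite IHt by lia. destruct (typeof (S d) (map (ty_shift 0) G) t); auto.
  - rewrite ty_wf_shift by auto. destruct (ty_wf d A); auto.
    rewrite IHt by auto. destruct (typeof d G t) as [[]|]; simpl; auto.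
    + destruct (c <=? n); auto.
    + rewrite ty_shift_subst_high by lia. auto.
Qed.

Lemma typeof_subst : forall t d G1 G A v T,
  typeof d (G1 ++ G) v = Some A ->
  typeof d (G1 ++ A :: G) t = Some T ->
  typeof d (G1 ++ G) (tm_subst (length G1) v t) = Some T.
Proof.
  induction t; intros d G1 G A0 v T Hv Ht; cbn [tm_subst typeof] in *; auto.
  - destruct (Nat.eqb_spec n (length G1)).
    + subst. rewrite nth_error_app2 in Ht by lia. rewrite Nat.sub_diag in Ht.
      simpl in Ht. inversion Ht; subst; auto.
    + destruct (Nat.ltb_spec (length G1) n); cbn [typeof].
      * rewrite nth_error_app2 in Ht by lia. rewrite nth_error_app2 by lia.
        replace (n - length G1) with (S (pred n - length G1)) in Ht by lia. auto.
      * rewrite nth_error_app1 in Ht by lia. rewrite nth_error_app1 by lia. auto.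
  - destruct (ty_wf d A); [|discriminate].
    destruct (typeof d (A :: G1 ++ A0 :: G) t) eqn:E; [|discriminate].
    specialize (IHt d (A :: G1) G A0 (tm_shift 0 v) t0). simpl in IHt.
    rewrite IHt; auto. rewrite typeof_shift0. auto.
  - destruct (typeof d (G1 ++ A0 :: G) t1) as [[]|] eqn:E1; try discriminate.
    destruct (typeof d (G1 ++ A0 :: G) t2) eqn:E2; try discriminate.
    erewrite IHt1 by eauto. erewrite IHt2 by eauto. auto.
  - destruct (typeof d (G1 ++ A0 :: G) t1) eqn:E1; try discriminate.
    destruct (typeof d (G1 ++ A0 :: G) t2) eqn:E2; try discriminate.
    erewrite IHt1 by eauto. erewrite IHt2 by eauto. auto.
  - destruct (typeof d (G1 ++ A0 :: G) t) as [[]|] eqn:E1; try discriminate.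
    erewrite IHt by eauto. auto.
  - destruct (typeof d (G1 ++ A0 :: G) t) as [[]|] eqn:E1; try discriminate.
    erewrite IHt by eauto. auto.
  - rewrite map_app in *. simpl in Ht.
    destruct (typeof (S d) (map (ty_shift 0) G1 ++ ty_shift 0 A0 :: map (ty_shift 0) G) t) eqn:E;
      try discriminate.
    specialize (IHt (S d) (map (ty_shift 0) G1) (map (ty_shift 0) G) (ty_shift 0 A0)
      (tm_tshift 0 v) t0).
    rewrite length_map in IHt. rewrite IHt; auto.
    rewrite <- map_app. rewrite typeof_tshift by lia. rewrite Hv. auto.
  - destruct (ty_wf d A); [|discriminate].
    destruct (typeof d (G1 ++ A0 :: G) t) as [[]|] eqn:E1; try discriminate.
    erewrite IHt by eauto. auto.
Qed.

Lemma typeof_tsubst : forall t d G k U T, k <= d -> ty_wf d U = true ->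
  typeof (S d) G t = Some T ->
  typeof d (map (ty_subst k U) G) (tm_tsubst k U t) = Some (ty_subst k U T).
Proof.
  induction t; intros d G k U T Hk HU Ht; cbn [tm_tsubst typeof] in *.
  - inversion Ht; auto.
  - destruct (ty_wf 0 A) eqn:E; inversion Ht; subst.
    rewrite ty_subst_wf; auto. eapply ty_wf_mono; eauto; lia.
  - rewrite nth_error_map, Ht. auto.
  - destruct (ty_wf (S d) A) eqn:EA; [|discriminate].
    rewrite ty_wf_subst by auto.
    destruct (typeof (S d) (A :: G) t) eqn:E; [|discriminate]. inversion Ht; subst.
    specialize (IHt d (A :: G) k U t0 Hk HU E). simpl in IHt. rewrite IHt. auto.
  - destruct (typeof (S d) G t1) as [[]|] eqn:E1; try discriminate.
    destruct (typeof (S d) G t2) eqn:E2; try discriminate.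
    destruct (ty_eq_dec A t); try discriminate. inversion Ht; subst.
    rewrite (IHt1 _ _ _ _ _ Hk HU E1), (IHt2 _ _ _ _ _ Hk HU E2). simpl.
    destruct ty_eq_dec; congruence.
  - destruct (typeof (S d) G t1) eqn:E1; try discriminate.
    destruct (typeof (S d) G t2) eqn:E2; try discriminate. inversion Ht; subst.
    rewrite (IHt1 _ _ _ _ _ Hk HU E1), (IHt2 _ _ _ _ _ Hk HU E2). auto.
  - destruct (typeof (S d) G t) as [[]|] eqn:E1; try discriminate. inversion Ht; subst.
    rewrite (IHt _ _ _ _ _ Hk HU E1). auto.
  - destruct (typeof (S d) G t) as [[]|] eqn:E1; try discriminate. inversion Ht; subst.
    rewrite (IHt _ _ _ _ _ Hk HU E1). auto.
  - destruct (typeof (S (S d)) (map (ty_shift 0) G) t) eqn:E; try discriminate.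
    inversion Ht; subst.
    assert (HU' : ty_wf (S d) (ty_shift 0 U) = true) by (rewrite ty_wf_shift; auto; lia).
    specialize (IHt (S d) _ (S k) (ty_shift 0 U) t0 ltac:(lia) HU' E).
    rewrite map_map in IHt.
    replace (map (fun x => ty_subst (S k) (ty_shift 0 U) (ty_shift 0 x)) G) with
      (map (ty_shift 0) (map (ty_subst k U) G)) in IHt.
    2:{ rewrite map_map. apply map_ext. intros a. apply ty_shift_subst_low. lia. }
    rewrite IHt. auto.
  - destruct (ty_wf (S d) A) eqn:EA; [|discriminate].
    rewrite ty_wf_subst by auto.
    destruct (typeof (S d) G t) as [[]|] eqn:E1; try discriminate. inversion Ht; subst.
    rewrite (IHt _ _ _ _ _ Hk HU E1). simpl.
    rewrite (ty_subst_subst B 0 k U A) by lia. auto.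
Qed.

Lemma typeof_beta d G A u v T : typeof d G (App (Lam A u) v) = Some T ->
  typeof d G (tm_subst 0 v u) = Some T.
Proof.
  simpl. destruct (ty_wf d A); [|discriminate].
  destruct (typeof d (A :: G) u) eqn:Eu; [|discriminate].
  destruct (typeof d G v) eqn:Ev; [|discriminate].
  destruct ty_eq_dec; [|discriminate]. subst. intros H. injection H as <-.
  exact (typeof_subst u d [] G _ v _ Ev Eu).
Qed.

Lemma typeof_eta_expansion d G A t a T :
  typeof d (A :: G) a = Some A ->
  typeof d G (Lam A (App (tm_shift 0 t) a)) = Some T -> typeof d G t = Some T.
Proof.
  intros Ha. simpl. destruct (ty_wf d A); [|discriminate].
  rewrite typeof_shift0, Ha. destruct (typeof d G t) as [[]|]; try discriminate.
  destruct ty_eq_dec; [|discriminate]. subst. intros H. injection H as <-. reflexivity.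
Qed.

Lemma typeof_star_of_typed d G u T : wfctx d G -> typeof d G u = Some T -> iso T = true ->
  typeof d G (star T) = Some T.
Proof. intros HG Hu Hi. apply star_typeof; [exact Hi|eapply typeof_wf; eassumption]. Qed.

Lemma typeof_beta2 d G t U T : typeof d G (TApp (TLam t) U) = Some T ->
  typeof d G (tm_tsubst 0 U t) = Some T.
Proof.
  simpl. destruct (ty_wf d U) eqn:EU; [|discriminate].
  destruct (typeof (S d) (map (ty_shift 0) G) t) eqn:Et; [|discriminate].
  intros H. injection H as <-.
  pose proof (typeof_tsubst t d (map (ty_shift 0) G) 0 U _ (Nat.le_0_l d) EU Et) as H.
  rewrite map_map, (map_ext _ (fun x => x)), map_id in H by (intros; apply ty_subst_shift).
  exact H.
Qed.

Lemma typeof_eta2 d G s T : typeof d G (TLam (TApp (tm_tshift 0 s) (TBVar 0))) = Some T ->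
  typeof d G s = Some T.
Proof.
  simpl. rewrite typeof_tshift by lia.
  destruct (typeof d G s) as [[]|]; simpl; try discriminate.
  intros H. injection H as <-. rewrite ty_subst_eta. reflexivity.
Qed.

Lemma subject_red : forall d G t t', step d G t t' -> forall T, wfctx d G ->
  typeof d G t = Some T -> typeof d G t' = Some T.
Proof.
  induction 1; intros T0 HG Ht.
  - eapply typeof_beta; eassumption.
  - simpl in Ht. destruct (typeof d G u), (typeof d G v); congruence.
  - simpl in Ht. destruct (typeof d G u), (typeof d G v); congruence.
  - exact (typeof_eta_expansion d G A t (BVar 0) T0 eq_refl Ht).
  - simpl in Ht. destruct (typeof d G u) as [[]|]; congruence.
  - rewrite H in Ht. injection Ht as <-. eapply typeof_star_of_typed; eassumption.
  - apply (typeof_eta_expansion d G A t (star A)); [|exact Ht].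
    apply star_typeof; [exact H|]. simpl in Ht. destruct (ty_wf d A); congruence.
  - pose proof (typeof_wf _ _ _ _ HG H) as Hw. simpl in Hw, Ht.
    apply andb_true_iff in Hw as [_ Hw]. rewrite H, star_typeof in Ht by assumption.
    congruence.
  - pose proof (typeof_wf _ _ _ _ HG H) as Hw. simpl in Hw, Ht.
    apply andb_true_iff in Hw as [Hw _]. rewrite H, star_typeof in Ht by assumption.
    congruence.
  - eapply typeof_beta2; eassumption.
  - eapply typeof_eta2; eassumption.
  - simpl in Ht |- *. destruct (ty_wf d A) eqn:EA; [|discriminate].
    destruct (typeof d (A :: G) t) eqn:Et; [|discriminate].
    erewrite IHstep; eauto. constructor; assumption.
  - simpl in Ht |- *. destruct (typeof d G u) eqn:Eu; [|discriminate].
    erewrite IHstep; eauto.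
  - simpl in Ht |- *. destruct (typeof d G v) eqn:Ev;
      [erewrite IHstep; eauto|destruct (typeof d G u) as [[]|]; discriminate].
  - simpl in Ht |- *. destruct (typeof d G u) eqn:Eu; [|discriminate].
    erewrite IHstep; eauto.
  - simpl in Ht |- *. destruct (typeof d G v) eqn:Ev;
      [erewrite IHstep; eauto|destruct (typeof d G u); discriminate].
  - simpl in Ht |- *. destruct (typeof d G u) eqn:Eu; [|discriminate].
    erewrite IHstep; eauto.
  - simpl in Ht |- *. destruct (typeof d G u) eqn:Eu; [|discriminate].
    erewrite IHstep; eauto.
  - simpl in Ht |- *. destruct (typeof (S d) (map (ty_shift 0) G) t) eqn:Et; [|discriminate].
    erewrite IHstep; eauto. apply wfctx_shift, HG.
  - simpl in Ht |- *. destruct (ty_wf d U); [|discriminate].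
    destruct (typeof d G u) eqn:Eu; [|discriminate].
    erewrite IHstep; eauto.
Qed.

Lemma red_typed : forall t t' T, red t t' -> has_type t T -> has_type t' T.
Proof. intros. eapply subject_red; eauto. constructor. Qed.

Lemma star_not_app : forall T a b, App a b = star T -> False.
Proof. destruct T; simpl; discriminate. Qed.
Lemma star_not_proj1 : forall T a, Proj1 a = star T -> False.
Proof. destruct T; simpl; discriminate. Qed.
Lemma star_not_proj2 : forall T a, Proj2 a = star T -> False.
Proof. destruct T; simpl; discriminate. Qed.
Lemma star_not_tapp : forall T a U, TApp a U = star T -> False.
Proof. destruct T; simpl; discriminate. Qed.

Ltac absurd_gentop_star T :=
  match goal with
  | E : typeof ?d ?G _ = Some ?T0, N : _ <> star ?T0 |- _ =>
      apply N; symmetry; exact (star_typeof_inv T d G T0 E)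
  end.

Lemma star_normal : forall T d G x, step d G (star T) x -> False.
Proof.
  induction T; intros d G x H.
  - inversion H; subst; absurd_gentop_star (TFVar X).
  - inversion H; subst; absurd_gentop_star (TBVar n).
  - inversion H; subst; absurd_gentop_star TTop.
  - simpl in H; inversion H; subst;
    first [ absurd_gentop_star (TProd T1 T2) | solve [eauto using star_not_proj1, star_not_proj2] ].
  - simpl in H; inversion H; subst;
    first [ absurd_gentop_star (TArr T1 T2) | solve [eauto using star_not_app] ].
  - simpl in H; inversion H; subst;
    first [ absurd_gentop_star (TAll T) | solve [eauto using star_not_tapp] ].
Qed.

(** * Strong normalisation *)

Definition SNa := Acc (fun a b => red b a).

Lemma SNa_SN : forall t, SNa t -> SN t.
Proof.
  intros t H. induction H as [t _ IH].
  intros [s [H0 Hs]]. subst.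
  apply (IH (s 1) (Hs 0)). exists (fun n => s (S n)). split; auto.
Qed.

Lemma not_SNa_step : forall x, ~ SNa x -> exists y, red x y /\ ~ SNa y.
Proof.
  intros x H. apply NNPP. intros H2. apply H. constructor. intros y Hy.
  apply NNPP. intros H3. apply H2. eauto.
Qed.

Lemma SN_SNa : forall t, SN t -> SNa t.
Proof.
  intros t H. apply NNPP. intros H1. apply H.
  set (B := {x : tm | ~ SNa x}).
  assert (next : forall b : B, {b' : B | red (proj1_sig b) (proj1_sig b')}).
  { intros [x Hx]. destruct (constructive_indefinite_description _ (not_SNa_step x Hx)) as [y [Hy1 Hy2]].
    exists (exist _ y Hy2). simpl. auto. }
  set (nx := fun b => proj1_sig (next b)).
  set (b0 := exist (fun x => ~ SNa x) t H1 : B).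
  exists (fun n => proj1_sig (Nat.iter n nx b0)). split; auto.
  intros n. simpl. exact (proj2_sig (next (Nat.iter n nx b0))).
Qed.

Lemma SN_step : forall t t', SN t -> red t t' -> SN t'.
Proof.
  intros t t' H Hr [s [H0 Hs]]. apply H.
  exists (fun n => match n with 0 => t | S m => s m end). split; auto.
  intros [|n]; subst; auto.
Qed.

Lemma SN_reducts : forall t, (forall t', red t t' -> SN t') -> SN t.
Proof.
  intros t H [s [H0 Hs]]. subst. apply (H (s 1) (Hs 0)).
  exists (fun n => s (S n)). split; auto.
Qed.

Lemma SN_ctx : forall (C : tm -> tm) t, (forall x y, red x y -> red (C x) (C y)) ->
  SN (C t) -> SN t.
Proof.
  intros C t HC H [s [H0 Hs]]. apply H. exists (fun n => C (s n)). subst. split; auto.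
Qed.

Lemma SN_app_l : forall t u, SN (App t u) -> SN t.
Proof. intros t u. apply (SN_ctx (fun x => App x u)). intros. apply st_appl; auto. Qed.
Lemma SN_proj1 : forall t, SN (Proj1 t) -> SN t.
Proof. intros t. apply (SN_ctx Proj1). intros. apply st_proj1c; auto. Qed.
Lemma SN_tapp : forall t U, SN (TApp t U) -> SN t.
Proof. intros t U. apply (SN_ctx (fun x => TApp x U)). intros. apply st_tapp; auto. Qed.

Inductive steps (d : nat) (G : list ty) : tm -> tm -> Prop :=
| sts_refl x : steps d G x x
| sts_step x y w : step d G x y -> steps d G y w -> steps d G x w.

Lemma steps_trans : forall d G x y w, steps d G x y -> steps d G y w -> steps d G x w.
Proof. induction 1; intros; auto. econstructor; eauto. Qed.

Lemma steps_lift : forall (C : tm -> tm) d1 G1 d G a b,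
  (forall x y, step d1 G1 x y -> step d G (C x) (C y)) ->
  steps d1 G1 a b -> steps d G (C a) (C b).
Proof. intros C d1 G1 d G a b HC H. induction H. constructor. econstructor; eauto. Qed.

(** * Undoing a variant *)

Definition isTop (A : ty) : bool := match A with TTop => true | _ => false end.

Fixpoint restore_star (z : nat) (t : tm) : tm :=
  match t with
  | Star => Star
  | FVar x A => if (x =? z) && isTop A then Star else FVar x A
  | BVar n => BVar n
  | Lam A b => Lam A (restore_star z b)
  | App u v => App (restore_star z u) (restore_star z v)
  | Pair u v => Pair (restore_star z u) (restore_star z v)
  | Proj1 u => Proj1 (restore_star z u)
  | Proj2 u => Proj2 (restore_star z u)
  | TLam b => TLam (restore_star z b)
  | TApp u A => TApp (restore_star z u) A
  end.

Fixpoint count_var (z : nat) (t : tm) : nat :=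
  match t with
  | Star => 0
  | FVar x A => if (x =? z) && isTop A then 1 else 0
  | BVar n => 0
  | Lam A b => count_var z b
  | App u v => count_var z u + count_var z v
  | Pair u v => count_var z u + count_var z v
  | Proj1 u => count_var z u
  | Proj2 u => count_var z u
  | TLam b => count_var z b
  | TApp u A => count_var z u
  end.

Lemma restore_star_shift : forall t z c, restore_star z (tm_shift c t) = tm_shift c (restore_star z t).
Proof.
  induction t; intros z c; simpl; try congruence.
  - destruct ((x =? z) && isTop A); auto.
  - destruct (c <=? n); auto.
Qed.

Lemma restore_star_tshift : forall t z c, restore_star z (tm_tshift c t) = tm_tshift c (restore_star z t).
Proof.
  induction t; intros z c; simpl; try congruence.
  destruct ((x =? z) && isTop A); auto.
Qed.

Lemma restore_star_subst : forall t z k v, restore_star z (tm_subst k v t) = tm_subst k (restore_star z v) (restore_star z t).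
Proof.
  induction t; intros z k v; simpl; try congruence.
  - destruct ((x =? z) && isTop A); auto.
  - destruct (n =? k); auto. destruct (k <? n); auto.
  - rewrite IHt, restore_star_shift; auto.
  - rewrite IHt, restore_star_tshift; auto.
Qed.

Lemma restore_star_tsubst : forall t z k U, restore_star z (tm_tsubst k U t) = tm_tsubst k U (restore_star z t).
Proof.
  induction t; intros z k U; simpl; try congruence.
  destruct ((x =? z) && isTop A); auto.
Qed.

Lemma restore_star_star : forall T z, restore_star z (star T) = star T.
Proof. induction T; intros z; simpl; congruence. Qed.

Lemma count_var_star : forall T z, count_var z (star T) = 0.
Proof. induction T; intros z; simpl; auto. rewrite IHT1, IHT2; auto. Qed.

Lemma typeof_restore_star : forall t z d G, typeof d G (restore_star z t) = typeof d G t.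
Proof.
  induction t; intros z d G; simpl; try rewrite ?IHt, ?IHt1, ?IHt2; auto.
  destruct (Nat.eqb_spec x z); destruct A; simpl; auto.
Qed.

Lemma restore_star_count0 : forall t z, count_var z t = 0 -> restore_star z t = t.
Proof.
  induction t; intros z H; simpl in *; try (f_equal; auto; lia).
  - destruct ((x =? z) && isTop A); auto; discriminate.
  - rewrite IHt1, IHt2; auto; lia.
  - rewrite IHt1, IHt2; auto; lia.
Qed.

(* Either the step is simulated, or it is a gentop step collapsing a subterm
   that contains [z]; then the count of [z] drops. *)
Lemma restore_star_step : forall d G s s', step d G s s' -> forall z,
  (restore_star z s = restore_star z s' /\ count_var z s' < count_var z s) \/ step d G (restore_star z s) (restore_star z s').
Proof.
  induction 1; intros z; cbn [restore_star count_var].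
  - right. rewrite restore_star_subst. apply st_beta.
  - right. apply st_proj1.
  - right. apply st_proj2.
  - right. rewrite restore_star_shift. apply st_eta.
  - right. apply st_sp.
  - destruct (classic (restore_star z u = star T)) as [E|E].
    + left. rewrite restore_star_star, count_var_star. split; auto.
      destruct (count_var z u) eqn:C; [|lia]. apply restore_star_count0 in C. congruence.
    + right. rewrite restore_star_star. apply st_gentop; auto. rewrite typeof_restore_star; auto.
  - right. rewrite restore_star_shift, restore_star_star. apply st_etatop; auto.
  - right. rewrite restore_star_star. eapply st_sptop1; eauto. rewrite typeof_restore_star; eauto.
  - right. rewrite restore_star_star. eapply st_sptop2; eauto. rewrite typeof_restore_star; eauto.
  - right. rewrite restore_star_tsubst. apply st_beta2.
  - right. rewrite restore_star_tshift. apply st_eta2.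
  - destruct (IHstep z) as [[E C]|S]; [left; split; congruence|right; constructor; auto].
  - destruct (IHstep z) as [[E C]|S]; [left; split; [congruence|lia]|right; constructor; auto].
  - destruct (IHstep z) as [[E C]|S]; [left; split; [congruence|lia]|right; constructor; auto].
  - destruct (IHstep z) as [[E C]|S]; [left; split; [congruence|lia]|right; constructor; auto].
  - destruct (IHstep z) as [[E C]|S]; [left; split; [congruence|lia]|right; constructor; auto].
  - destruct (IHstep z) as [[E C]|S]; [left; split; congruence|right; constructor; auto].
  - destruct (IHstep z) as [[E C]|S]; [left; split; congruence|right; constructor; auto].
  - destruct (IHstep z) as [[E C]|S]; [left; split; congruence|right; constructor; auto].
  - destruct (IHstep z) as [[E C]|S]; [left; split; congruence|right; constructor; auto].
Qed.

Lemma SNa_restore_star : forall z x, SNa x -> forall s, restore_star z s = x -> SNa s.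
Proof.
  intros z x H. induction H as [x _ IH].
  intros s. induction s as [s IHs] using (well_founded_induction
    (Wf_nat.well_founded_ltof _ (count_var z))).
  intros Hs. constructor. intros s' Hr.
  destruct (restore_star_step _ _ _ _ Hr z) as [[E C]|S].
  - apply IHs; auto. congruence.
  - subst. eapply IH; eauto.
Qed.

Lemma restore_replace_star : forall t z, ~ occurs z TTop t -> restore_star z (replace_star z t) = t.
Proof.
  induction t; intros z H; simpl in *; try (f_equal; auto; fail).
  - rewrite Nat.eqb_refl. auto.
  - destruct (Nat.eqb_spec x z); destruct A; simpl; auto. subst. exfalso; auto.
  all: f_equal; auto.
Qed.

Lemma typeof_replace : forall t z d G, typeof d G (replace_star z t) = typeof d G t.
Proof. induction t; intros z d G; simpl; try rewrite ?IHt, ?IHt1, ?IHt2; auto. Qed.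

Lemma restore_star_not_occurs : forall u z, ~ occurs z TTop (restore_star z u).
Proof.
  induction u; intros z; simpl; try tauto.
  - destruct (Nat.eqb_spec x z); destruct A; simpl; try tauto; intros [H1 H2]; congruence.
  - apply IHu.
  - specialize (IHu1 z); specialize (IHu2 z); tauto.
  - specialize (IHu1 z); specialize (IHu2 z); tauto.
  - apply IHu.
  - apply IHu.
  - apply IHu.
  - apply IHu.
Qed.

Lemma steps_restore_star : forall u z d G, steps d G u (restore_star z u).
Proof.
  induction u; intros z d G; simpl; try constructor.
  - destruct (Nat.eqb_spec x z); destruct A; simpl; try constructor.
    econstructor; [|constructor]. change Star with (star TTop). apply st_gentop; auto.
    simpl. discriminate.
  - apply (steps_lift (Lam A) d (A :: G)); auto. intros; constructor; auto.
  - eapply steps_trans.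
    + apply (steps_lift (fun x => App x u2) d G); auto. intros; constructor; auto.
    + apply (steps_lift (fun x => App (restore_star z u1) x) d G); auto. intros; constructor; auto.
  - eapply steps_trans.
    + apply (steps_lift (fun x => Pair x u2) d G); auto. intros; constructor; auto.
    + apply (steps_lift (fun x => Pair (restore_star z u1) x) d G); auto. intros; constructor; auto.
  - apply (steps_lift Proj1 d G); auto. intros; constructor; auto.
  - apply (steps_lift Proj2 d G); auto. intros; constructor; auto.
  - apply (steps_lift TLam (S d) (map (ty_shift 0) G)); auto. intros; constructor; auto.
  - apply (steps_lift (fun x => TApp x A) d G); auto. intros; constructor; auto.
Qed.

Lemma steps_replace_restore_star : forall u z d G, steps d G (replace_star z (restore_star z u)) u.
Proof.
  induction u; intros z d G; simpl; try constructor.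
  - econstructor; [|constructor]. change Star with (star TTop). apply st_gentop; auto.
    simpl. discriminate.
  - destruct (Nat.eqb_spec x z); destruct A; simpl; try constructor. subst. constructor.
  - apply (steps_lift (Lam A) d (A :: G)); auto. intros; constructor; auto.
  - eapply steps_trans.
    + apply (steps_lift (fun x => App x (replace_star z (restore_star z u2))) d G); auto. intros; constructor; auto.
    + apply (steps_lift (fun x => App u1 x) d G); auto. intros; constructor; auto.
  - eapply steps_trans.
    + apply (steps_lift (fun x => Pair x (replace_star z (restore_star z u2))) d G); auto. intros; constructor; auto.
    + apply (steps_lift (fun x => Pair u1 x) d G); auto. intros; constructor; auto.
  - apply (steps_lift Proj1 d G); auto. intros; constructor; auto.
  - apply (steps_lift Proj2 d G); auto. intros; constructor; auto.
  - apply (steps_lift TLam (S d) (map (ty_shift 0) G)); auto. intros; constructor; auto.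
  - apply (steps_lift (fun x => TApp x A) d G); auto. intros; constructor; auto.
Qed.

Lemma inv_app : forall t u x, red (App t u) x ->
  (exists t', red t t' /\ x = App t' u) \/ (exists u', red u u' /\ x = App t u') \/
  (exists T, typeof 0 [] (App t u) = Some T /\ iso T = true /\ x = star T) \/
  (exists A b, t = Lam A b /\ x = tm_subst 0 u b).
Proof. intros t u x H. unfold red in H. inversion H; subst; eauto 10. Qed.

Lemma inv_proj1 : forall t x, red (Proj1 t) x ->
  (exists t', red t t' /\ x = Proj1 t') \/
  (exists T, typeof 0 [] (Proj1 t) = Some T /\ iso T = true /\ x = star T) \/
  (exists a b, t = Pair a b /\ x = a).
Proof. intros t x H. unfold red in H. inversion H; subst; eauto 10. Qed.

Lemma inv_proj2 : forall t x, red (Proj2 t) x ->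
  (exists t', red t t' /\ x = Proj2 t') \/
  (exists T, typeof 0 [] (Proj2 t) = Some T /\ iso T = true /\ x = star T) \/
  (exists a b, t = Pair a b /\ x = b).
Proof. intros t x H. unfold red in H. inversion H; subst; eauto 10. Qed.

Lemma inv_tapp : forall t U x, red (TApp t U) x ->
  (exists t', red t t' /\ x = TApp t' U) \/
  (exists T, typeof 0 [] (TApp t U) = Some T /\ iso T = true /\ x = star T) \/
  (exists b, t = TLam b /\ x = tm_tsubst 0 U b).
Proof. intros t U x H. unfold red in H. inversion H; subst; eauto 10. Qed.

Lemma inv_fvar : forall y A x, red (FVar y A) x ->
  (exists T, typeof 0 [] (FVar y A) = Some T /\ iso T = true /\ x = star T).
Proof. intros y A x H. unfold red in H. inversion H; subst; eauto 10. Qed.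

Lemma red_star : forall T x, red (star T) x -> False.
Proof. intros. eapply star_normal; eauto. Qed.
(** * Reducibility candidates *)

Lemma mkRC : forall T (R : tm -> Prop),
  (forall t, R t -> has_type t T) ->
  (iso T = true -> R (star T)) ->
  (forall t z, R t -> ~ occurs z TTop t -> R (replace_star z t)) ->
  (forall t, R t -> SN t) ->
  (forall t t', R t -> red t t' -> R t') ->
  (forall t, has_type t T -> neutral t -> (forall t', red t t' -> R t') -> R t) ->
  RC T R.
Proof. intros. unfold RC, variant_closed. tauto. Qed.

Section RCProperties.

Context {T : ty} {R : tm -> Prop} (HR : RC T R).

Lemma rc_typed t : R t -> has_type t T.
Proof. apply HR. Qed.

Lemma rc_star : iso T = true -> R (star T).
Proof. apply HR. Qed.

Lemma rc_variant t z : R t -> ~ occurs z TTop t -> R (replace_star z t).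
Proof. apply HR. Qed.

Lemma rc_SN t : R t -> SN t.
Proof. apply HR. Qed.

Lemma rc_red t t' : R t -> red t t' -> R t'.
Proof. apply HR. Qed.

Lemma rc_neutral t :
  has_type t T -> neutral t -> (forall t', red t t' -> R t') -> R t.
Proof. apply HR. Qed.

Lemma rc_steps t t' : R t -> steps 0 [] t t' -> R t'.
Proof. intros Ht Hs. induction Hs; eauto using rc_red. Qed.

Lemma rc_fvar x : is_type T -> R (FVar x T).
Proof.
  intros HT. apply rc_neutral.
  - unfold has_type. simpl. rewrite HT. reflexivity.
  - exact I.
  - intros t' Ht'. apply inv_fvar in Ht' as (T' & E & Hi & ->).
    simpl in E. rewrite HT in E. injection E as <-. apply rc_star, Hi.
Qed.

End RCProperties.

Lemma variant_SN t z : SN t -> ~ occurs z TTop t -> SN (replace_star z t).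
Proof.
  intros Ht Hz. apply SNa_SN, (SNa_restore_star z t (SN_SNa t Ht)).
  apply restore_replace_star, Hz.
Qed.

Lemma RC_top : RC TTop (SN_set TTop).
Proof.
  apply mkRC.
  - intros t [Ht _]. exact Ht.
  - intros _. split; [reflexivity|].
    apply SN_reducts. intros t' Ht'. destruct (red_star TTop t' Ht').
  - intros t z [Ht Hsn] Hz. split.
    + unfold has_type. rewrite typeof_replace. exact Ht.
    + apply variant_SN; assumption.
  - intros t [_ Hsn]. exact Hsn.
  - intros t t' [Ht Hsn] Hr. split; [eapply red_typed|eapply SN_step]; eauto.
  - intros t Ht _ Hr. split; [exact Ht|]. apply SN_reducts. intros t' Ht'. apply Hr, Ht'.
Qed.

(* CR3 at an elimination of [t]; the last premise is the redex case, vacuous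
   for neutral [t] and for [t = star _]. *)

Lemma rc_proj1 A B RA t : RC A RA -> has_type t (TProd A B) ->
  (forall t', red t t' -> RA (Proj1 t')) ->
  (forall a b, t = Pair a b -> RA a) -> RA (Proj1 t).
Proof.
  intros HA Ht Hred Hpair. apply (rc_neutral HA).
  - unfold has_type in *. simpl. rewrite Ht. reflexivity.
  - exact I.
  - intros x Hx.
    apply inv_proj1 in Hx as [(t' & Ht' & ->)|[(T & E & Hi & ->)|(a & b & -> & ->)]].
    + apply Hred, Ht'.
    + unfold has_type in Ht. simpl in E. rewrite Ht in E. injection E as <-.
      apply (rc_star HA Hi).
    + eapply Hpair; reflexivity.
Qed.

Lemma rc_proj2 A B RB t : RC B RB -> has_type t (TProd A B) ->
  (forall t', red t t' -> RB (Proj2 t')) ->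
  (forall a b, t = Pair a b -> RB b) -> RB (Proj2 t).
Proof.
  intros HB Ht Hred Hpair. apply (rc_neutral HB).
  - unfold has_type in *. simpl. rewrite Ht. reflexivity.
  - exact I.
  - intros x Hx.
    apply inv_proj2 in Hx as [(t' & Ht' & ->)|[(T & E & Hi & ->)|(a & b & -> & ->)]].
    + apply Hred, Ht'.
    + unfold has_type in Ht. simpl in E. rewrite Ht in E. injection E as <-.
      apply (rc_star HB Hi).
    + eapply Hpair; reflexivity.
Qed.

Lemma rc_app A B RA RB t : RC A RA -> RC B RB -> has_type t (TArr A B) ->
  (forall t', red t t' -> forall u, RA u -> RB (App t' u)) ->
  (forall A' b, t = Lam A' b -> forall u, RA u -> RB (tm_subst 0 u b)) ->
  forall u, RA u -> RB (App t u).
Proof.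
  intros HA HB Ht Hred Hlam u Hu.
  induction (SN_SNa u (rc_SN HA _ Hu)) as [u _ IH].
  assert (Htu : typeof 0 [] (App t u) = Some B).
  { simpl. rewrite Ht, (rc_typed HA _ Hu). destruct ty_eq_dec; congruence. }
  apply (rc_neutral HB); [exact Htu|exact I|].
  intros x Hx. apply inv_app in Hx as
    [(t' & Ht' & ->)|[(u' & Hu' & ->)|[(T & E & Hi & ->)|(A' & b & -> & ->)]]].
  - apply Hred; assumption.
  - apply IH; [exact Hu'|eapply rc_red; eassumption].
  - rewrite Htu in E. injection E as <-. apply (rc_star HB Hi).
  - eapply Hlam; [reflexivity|exact Hu].
Qed.

Lemma has_type_tapp t B U : has_type t (TAll B) -> is_type U ->
  has_type (TApp t U) (ty_subst 0 U B).
Proof. unfold has_type, is_type. intros Ht HU. simpl. rewrite HU, Ht. reflexivity. Qed.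

Lemma rc_tapp B U R t : RC (ty_subst 0 U B) R -> is_type U -> has_type t (TAll B) ->
  (forall t', red t t' -> R (TApp t' U)) ->
  (forall b, t = TLam b -> R (tm_tsubst 0 U b)) -> R (TApp t U).
Proof.
  intros HBU HU Ht Hred Htlam. pose proof (has_type_tapp t B U Ht HU) as HtU.
  apply (rc_neutral HBU); [exact HtU|exact I|].
  intros x Hx.
  apply inv_tapp in Hx as [(t' & Ht' & ->)|[(T & E & Hi & ->)|(b & -> & ->)]].
  - apply Hred, Ht'.
  - unfold has_type in HtU. rewrite HtU in E. injection E as <-. apply (rc_star HBU Hi).
  - apply Htlam. reflexivity.
Qed.

Definition prodRC (A B : ty) (RA RB : tm -> Prop) (t : tm) : Prop :=
  has_type t (TProd A B) /\ RA (Proj1 t) /\ RB (Proj2 t).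

Definition arrRC (A B : ty) (RA RB : tm -> Prop) (t : tm) : Prop :=
  has_type t (TArr A B) /\ forall u, RA u -> RB (App t u).

Definition allRC (B : ty) (RF : ty -> (tm -> Prop) -> tm -> Prop) (t : tm) : Prop :=
  has_type t (TAll B) /\
  forall U S, is_type U -> RC U S -> RF U S (TApp t U).

Lemma prodRC_RC A B RA RB : is_type A -> is_type B -> RC A RA -> RC B RB ->
  RC (TProd A B) (prodRC A B RA RB).
Proof.
  intros WA WB HA HB. apply mkRC.
  - intros t [Ht _]. exact Ht.
  - simpl. intros Hi. apply andb_true_iff in Hi as [HiA HiB].
    assert (Hs : has_type (star (TProd A B)) (TProd A B)).
    { apply star_typeof; simpl; [rewrite HiA, HiB|rewrite WA, WB]; reflexivity. }
    split; [exact Hs|split].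
    + apply (rc_proj1 A B); auto.
      * intros t' Ht'. destruct (red_star (TProd A B) t' Ht').
      * intros a b E. injection E as <- _. apply (rc_star HA HiA).
    + apply (rc_proj2 A B); auto.
      * intros t' Ht'. destruct (red_star (TProd A B) t' Ht').
      * intros a b E. injection E as _ <-. apply (rc_star HB HiB).
  - intros t z (Ht & Ha & Hb) Hz. split; [|split].
    + unfold has_type. rewrite typeof_replace. exact Ht.
    + exact (rc_variant HA (Proj1 t) z Ha Hz).
    + exact (rc_variant HB (Proj2 t) z Hb Hz).
  - intros t (_ & Ha & _). apply SN_proj1, (rc_SN HA), Ha.
  - intros t t' (Ht & Ha & Hb) Hr. split; [|split].
    + eapply red_typed; eassumption.
    + eapply (rc_red HA); [exact Ha|apply st_proj1c, Hr].
    + eapply (rc_red HB); [exact Hb|apply st_proj2c, Hr].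
  - intros t Ht Hn Hr. split; [exact Ht|split].
    + apply (rc_proj1 A B); auto.
      * intros t' Ht'. apply Hr, Ht'.
      * intros a b ->. destruct Hn.
    + apply (rc_proj2 A B); auto.
      * intros t' Ht'. apply Hr, Ht'.
      * intros a b ->. destruct Hn.
Qed.

Lemma arrRC_RC A B RA RB : is_type A -> is_type B -> RC A RA -> RC B RB ->
  RC (TArr A B) (arrRC A B RA RB).
Proof.
  intros WA WB HA HB. apply mkRC.
  - intros t [Ht _]. exact Ht.
  - simpl. intros Hi.
    assert (Hs : has_type (star (TArr A B)) (TArr A B)).
    { apply star_typeof; simpl; [|rewrite WA, WB]; auto. }
    split; [exact Hs|].
    apply (rc_app A B RA RB); auto.
    + intros t' Ht'. destruct (red_star (TArr A B) t' Ht').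
    + intros A' b E u _. injection E as _ <-. rewrite star_tm_subst. apply (rc_star HB Hi).
  - intros t z [Ht Happ] Hz. split.
    + unfold has_type. rewrite typeof_replace. exact Ht.
    + intros u Hu. set (u0 := restore_star z u).
      assert (Hu0 : RA u0) by exact (rc_steps HA u u0 Hu (steps_restore_star u z 0 [])).
      assert (Hz0 : ~ occurs z TTop (App t u0)).
      { pose proof (restore_star_not_occurs u z). simpl. tauto. }
      apply (rc_steps HB _ _ (rc_variant HB _ z (Happ u0 Hu0) Hz0)).
      apply (steps_lift (App (replace_star z t)) 0 []).
      * intros x y Hxy. apply st_appr, Hxy.
      * apply steps_replace_restore_star.
  - intros t [_ Happ]. apply (SN_app_l t (FVar 0 A)), (rc_SN HB), Happ, rc_fvar; assumption.
  - intros t t' [Ht Happ] Hr. split.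
    + eapply red_typed; eassumption.
    + intros u Hu. eapply (rc_red HB); [apply Happ, Hu|apply st_appl, Hr].
  - intros t Ht Hn Hr. split; [exact Ht|].
    apply (rc_app A B RA RB); auto.
    + intros t' Ht'. apply Hr, Ht'.
    + intros A' b ->. destruct Hn.
Qed.

Lemma allRC_RC B RF : is_type (TAll B) ->
  (forall U S, is_type U -> RC U S -> RC (ty_subst 0 U B) (RF U S)) ->
  RC (TAll B) (allRC B RF).
Proof.
  intros WB HF. apply mkRC.
  - intros t [Ht _]. exact Ht.
  - simpl. intros Hi.
    assert (Hs : has_type (star (TAll B)) (TAll B)) by (apply star_typeof; auto).
    split; [exact Hs|].
    intros U S HU HS. apply (rc_tapp B); auto.
    + intros t' Ht'. destruct (red_star (TAll B) t' Ht').
    + intros b E. injection E as <-. rewrite star_tsubst by exact Hi.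
      apply (rc_star (HF U S HU HS)), iso_subst, Hi.
  - intros t z [Ht Happ] Hz. split.
    + unfold has_type. rewrite typeof_replace. exact Ht.
    + intros U S HU HS. exact (rc_variant (HF U S HU HS) (TApp t U) z (Happ U S HU HS) Hz).
  - intros t [_ Happ]. apply (SN_tapp t TTop).
    apply (rc_SN (HF TTop _ eq_refl RC_top)), Happ; [reflexivity|exact RC_top].
  - intros t t' [Ht Happ] Hr. split.
    + eapply red_typed; eassumption.
    + intros U S HU HS. eapply (rc_red (HF U S HU HS)); [apply Happ; assumption|].
      apply st_tapp, Hr.
  - intros t Ht Hn Hr. split; [exact Ht|].
    intros U S HU HS. apply (rc_tapp B); auto.
    + intros t' Ht'. apply Hr; assumption.
    + intros b ->. destruct Hn.
Qed.

Lemma RED_RC T : forall d f F g G, ty_wf d T = true -> closed_env f -> closed_env g ->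
  (forall X, In X (ftv T) -> RC (f X) (F X)) ->
  (forall n, n < d -> RC (g n) (G n)) ->
  RC (tinst f g 0 T) (RED f F g G T).
Proof.
  induction T as [X|n| |A IHA B IHB|A IHA B IHB|B IHB];
    intros d f F g G Hwf Hf Hg HF HG; simpl in Hwf |- *.
  - apply HF. left. reflexivity.
  - rewrite Nat.sub_0_r. apply HG, Nat.ltb_lt, Hwf.
  - exact RC_top.
  - apply andb_true_iff in Hwf as [HwA HwB].
    apply prodRC_RC; try apply (tinst_wf _ _ _ 0); auto;
      [eapply IHA|eapply IHB]; eauto; intros X HX; apply HF, in_or_app; auto.
  - apply andb_true_iff in Hwf as [HwA HwB].
    apply arrRC_RC; try apply (tinst_wf _ _ _ 0); auto;
      [eapply IHA|eapply IHB]; eauto; intros X HX; apply HF, in_or_app; auto.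
  - apply (allRC_RC _ (fun U RU => RED f F (scons U g) (scons RU G) B)).
    { exact (tinst_wf (TAll B) f g 0 Hf Hg). }
    intros U RU HU HRU. rewrite <- tinst_scons by assumption.
    apply (IHB (S d)); auto.
    + apply closed_env_scons; assumption.
    + intros [|n] Hn; simpl; [exact HRU|apply HG; lia].
Qed.

Lemma assoc_In {A : Type} Xs (vs : list A) X v : assoc Xs vs X = Some v -> In v vs.
Proof.
  revert vs. induction Xs as [|Y Xs IH]; intros [|w vs] H; try discriminate.
  simpl in H. destruct (Y =? X); [injection H as ->; left|right; eauto]; reflexivity.
Qed.

Lemma fsub_closed Xs ps : Forall is_type ps -> closed_env (fsub Xs ps).
Proof.
  intros Hps X. unfold fsub. destruct (assoc Xs ps X) eqn:E; [|reflexivity].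
  rewrite Forall_forall in Hps. apply Hps, (assoc_In _ _ _ _ E).
Qed.

Lemma fRC_RC Xs ps Rs X : In X Xs -> length ps = length Xs -> Forall2 RC ps Rs ->
  RC (fsub Xs ps X) (fRC Xs Rs X).
Proof.
  unfold fsub, fRC. revert ps Rs.
  induction Xs as [|Y Xs IH]; intros ps Rs HX Hl HRs; [destruct HX|].
  destruct HRs as [|p R ps Rs HpR HRs]; simpl in Hl |- *; [discriminate|].
  destruct (Nat.eqb_spec Y X); [exact HpR|].
  destruct HX as [->|HX]; [contradiction|]. apply IH; auto.
Qed.

Theorem mainTheorem13 (phi : ty) (Xs : list nat) (ps : list ty)
    (Rs : list (tm -> Prop)) :
  is_type phi ->
  NoDup Xs ->
  length ps = length Xs ->
  (forall X, In X (ftv phi) -> In X Xs) ->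
  Forall is_type ps ->
  Forall2 RC ps Rs ->
  RC (msubst Xs ps phi) (RED_vec Xs ps Rs phi).
Proof.
  intros Hphi _ Hl Hftv Hps HRs.
  apply (RED_RC phi 0).
  - exact Hphi.
  - apply fsub_closed, Hps.
  - intros n. reflexivity.
  - intros X HX. apply fRC_RC; auto.
  - intros n Hn. lia.
Qed.
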